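(* Let $b,w\ge0$ be integers and let $d_1,\dots,d_{b+1},e_1,\dots,e_{w+1}\in\mathbb N$ satisfy $d_1+\dots+d_{b+1}=b+w+1=e_1+\dots+e_{w+1}$. Let $S$ be the set of spanning trees $t$ of the complete bipartite graph $K_{b+1,w+1}$ with parts $\{a_1,\dots,a_{b+1}\}$ and $\{c_1,\dots,c_{w+1}\}$ such that $t$ contains the edge $\{a_1,c_1\}$, $\deg_t(a_i)=d_i$ for all $i\le b+1$ and $\deg_t(c_j)=e_j$ for all $j\le w+1$. Then $$\#S=\binom{b}{e_1-1,\dots,e_{w+1}-1}\binom{w}{d_1-1,\dots,d_{b+1}-1}\times\begin{cases}1-\dfrac{(b-e_1+1)(w-d_1+1)}{bw},&\text{if }w,b>0,\\[2mm]1,&\text{if }w=0\text{ or }b=0.\end{cases}$$ By symmetry, the same holds when the edge $\{a_1,c_1\}$ is replaced by any prescribed edge $\{a_k,c_m\}$, with $d_1,e_1$ replaced by $d_k,e_m$.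
   Context: $\binom{n}{k_1,\dots,k_r}$ denotes the multinomial coefficient $\frac{n!}{k_1!\cdots k_r!}$ (for $k_1+\dots+k_r=n$). Spanning trees are subgraphs of $K_{b+1,w+1}$ on all $b+w+2$ vertices that are trees; $\deg_t$ is the degree in $t$. *)

From HB Require Import structures.
From mathcomp Require Import all_boot all_order all_algebra.
From mathcomp Require Import boolp.
Set Implicit Arguments. Unset Strict Implicit. Unset Printing Implicit Defensive.
Import Order.TTheory GRing.Theory Num.Theory.

(* Complete bipartite graph K_{b+1,w+1}: vertices a_i (i : 'I_b.+1) and
   c_j (j : 'I_w.+1); the edge {a_i, c_j} is the pair (i, j).
   A spanning subgraph is a set of such edges. *)
Definition vert (b w : nat) := ('I_b.+1 + 'I_w.+1)%type.
Definition edge (b w : nat) := ('I_b.+1 * 'I_w.+1)%type.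

Definition adj (b w : nat) (t : {set edge b w}) : rel (vert b w) :=
  fun x y => match x, y with
             | inl i, inr j => (i, j) \in t
             | inr j, inl i => (i, j) \in t
             | _, _ => false
             end.

Definition connected (b w : nat) (t : {set edge b w}) : Prop :=
  forall x y : vert b w, connect (adj t) x y.

Definition acyclic (b w : nat) (t : {set edge b w}) : Prop :=
  forall p : seq (vert b w), uniq p -> 2 < size p -> ~~ cycle (adj t) p.

Definition is_spanning_tree (b w : nat) (t : {set edge b w}) : Prop :=
  connected t /\ acyclic t.

Definition deg_a (b w : nat) (t : {set edge b w}) (i : 'I_b.+1) : nat :=
  #|[set j : 'I_w.+1 | (i, j) \in t]|.
Definition deg_c (b w : nat) (t : {set edge b w}) (j : 'I_w.+1) : nat :=
  #|[set i : 'I_b.+1 | (i, j) \in t]|.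

(* Multinomial coefficient n!/(k_1!...k_r!) with integer entries;
   by convention it is 0 unless all k_i >= 0 and they sum to n. *)
Definition multinom (I : finType) (n : nat) (k : I -> int) : nat :=
  if [forall i, (0 <= k i)%R] && ((\sum_i k i)%R == Posz n)
  then n`! %/ \prod_i (`|k i|%N)`!
  else 0.

Definition S_set (b w : nat) (d : 'I_b.+1 -> nat) (e : 'I_w.+1 -> nat)
    (k : 'I_b.+1) (m : 'I_w.+1) : {set {set edge b w}} :=
  [set t : {set edge b w} |
     `[< is_spanning_tree t /\ (k, m) \in t /\
         (forall i, deg_a t i = d i) /\ (forall j, deg_c t j = e j) >]].

(* Induction on the number of vertices, removing a leaf.  If a_i has degree 1, deleting its
   unique edge {a_i, c_j} is a bijection from the trees with the prescribed degrees onto the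
   disjoint union over j of the trees on the remaining vertices in which c_j has degree
   e_j - 1.  The closed form N = (|A|-1)! (|C|-1)! prod_i d_i/d_i! prod_j e_j/e_j! obeys the
   same recursion because the weights (e_j - 1)/(|A| - 1) sum to 1, and so does N times the
   edge factor of the trees through {a_k, c_m}: for k = i only the term j = m survives, and
   for k <> i the factor is affine in e_m.  A degree count shows that, unless the tree is a
   single edge or some prescribed degree is 0 (no trees, and N = 0), one side with at least
   two vertices has a vertex of degree 1; the two sides play symmetric roles. *)

From mathcomp Require Import all_boot all_order all_algebra.
From mathcomp Require Import boolp.
From mathcomp Require Import ring zify.
Import Order.TTheory GRing.Theory Num.Theory.
Set Implicit Arguments. Unset Strict Implicit. Unset Printing Implicit Defensive.

Section SymmetricRelation.
Variables (T : eqType) (r : rel T).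
Hypothesis r_sym : symmetric r.

Lemma cycle_two_neighbours p v : uniq p -> 2 < size p -> cycle r p -> v \in p ->
  exists u1 u2, [/\ u1 != u2, r v u1 & r v u2].
Proof.
move=> up sp cp /rot_to [n q Eq].
have : uniq (v :: q) by rewrite -Eq rot_uniq.
have : cycle r (v :: q) by rewrite -Eq rot_cycle.
have : 2 < size (v :: q) by rewrite -Eq size_rot.
case: q {Eq} => [|u1 [|u q]] //= _ /andP [vu1].
rewrite rcons_path => /andP [_ /andP [_ lastv]] /and3P [_ u1_fresh _].
exists u1, (last u q); split => //; last by rewrite r_sym.
by apply: contraNneq u1_fresh => ->; apply: mem_last.
Qed.

Lemma uniq_path_avoid_leaf v w x p : (forall u, r v u -> u = w) ->
  path r x p -> uniq (x :: p) -> x != v -> last x p != v -> v \notin p.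
Proof.
move=> leaf pp up _ lv; apply/negP => vp; move: pp up lv.
case/splitPr: vp => p1 p2; rewrite -cat_cons cat_uniq cat_path last_cat.
case: p2 => [|u p2] /=; first by rewrite eqxx.
move=> /and3P [_ pred_v /andP [/leaf succ_v _]] /and5P [_ + _ _ _] _.
rewrite r_sym in pred_v.
by rewrite succ_v -(leaf _ pred_v) mem_last orbT.
Qed.

End SymmetricRelation.

Lemma inl_eqE (A B : eqType) (a a' : A) : (@inl A B a == inl a') = (a == a').
Proof. by []. Qed.

Lemma set1D1_neq (T : finType) (x y : T) : x != y -> [set x] :\ y = [set x].
Proof. by move=> xy; apply/setDidPl; rewrite disjoints1 inE. Qed.

Definition decr (T : eqType) (e : T -> nat) (j : T) : T -> nat :=
  fun j' => e j' - (j' == j).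

Section BipartiteTrees.
Variables A B : finType.
Implicit Types (t F : {set A * B}) (VA : {set A}) (VB : {set B}).

Definition badj t : rel (A + B) := fun x y =>
  match x, y with
  | inl i, inr j => (i, j) \in t
  | inr j, inl i => (i, j) \in t
  | _, _ => false
  end.

Definition in_parts VA VB (x : A + B) :=
  match x with inl i => i \in VA | inr j => j \in VB end.

(* Spanning trees of the complete bipartite graph on VA and VB, taken as subsets of A and B
   so that deleting a leaf does not change the types. *)
Definition btree VA VB t := [/\ t \subset setX VA VB,
  forall x y, in_parts VA VB x -> in_parts VA VB y -> connect (badj t) x y &
  forall p, uniq p -> 2 < size p -> ~~ cycle (badj t) p].

Definition degA t i := #|[set j | (i, j) \in t]|.
Definition degB t j := #|[set i | (i, j) \in t]|.

Definition btrees VA VB (d : A -> nat) (e : B -> nat) F : {set {set A * B}} :=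
  [set t | `[< [/\ btree VA VB t, F \subset t,
                  {in VA, forall i, degA t i = d i} &
                  {in VB, forall j, degB t j = e j}] >]].

Lemma btreesP VA VB d e F t :
  reflect [/\ btree VA VB t, F \subset t,
              {in VA, forall i, degA t i = d i} & {in VB, forall j, degB t j = e j}]
          (t \in btrees VA VB d e F).
Proof. by rewrite inE; apply: asboolP. Qed.

Lemma badj_sym t : symmetric (badj t).
Proof. by case=> [i|j] [i'|j']. Qed.

Lemma edge_in_parts VA VB t i j :
  t \subset setX VA VB -> (i, j) \in t -> i \in VA /\ j \in VB.
Proof. by move=> /subsetP tV /tV; rewrite inE => /andP. Qed.

Lemma btree_edge_notin VA VB t i j : i \notin VA -> btree VA VB t -> (i, j) \notin t.
Proof. by move=> iV [tV _ _]; apply: contra iV => /(edge_in_parts tV) []. Qed.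

Lemma btree_degA_gt0 VA VB t i : btree VA VB t -> i \in VA -> VB != set0 -> 0 < degA t i.
Proof.
case=> _ conn _ iV /set0Pn [j0 j0V].
have /connectP [[|[//|j] p] //= /andP [ij _] _] := conn (inl i) (inr j0) iV j0V.
by apply/card_gt0P; exists j; rewrite inE.
Qed.

Lemma btree_add_leaf VA VB t i j : i \in VA -> j \in VB ->
  btree (VA :\ i) VB t -> btree VA VB ((i, j) |: t).
Proof.
move=> iV jV tree; have [tV conn acyc] := tree.
set t' := (i, j) |: t.
have fresh j' : (i, j') \notin t by apply: btree_edge_notin tree; rewrite setD11.
have nbr u : badj t' (inl i) u -> u = inr j.
  by case: u => [//|j'] /=; rewrite !inE (negbTE (fresh j')) orbF xpair_eqE eqxx => /eqP ->.
have lift : subrel (connect (badj t)) (connect (badj t')).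
  apply: connect_sub; case=> [a|b] [a'|b'] //= ab; apply: connect1 => /=;
  by rewrite inE ab orbT.
have from_i x : in_parts VA VB x -> connect (badj t') (inl i) x.
  have ij : connect (badj t') (inl i) (inr j) by apply: connect1; rewrite /= setU11.
  case: x => [a|b] /= xV.
    have [-> //|ai] := eqVneq a i.
    by apply: connect_trans ij (lift _ _ (conn (inr j) (inl a) jV _)); rewrite /= !inE ai.
  exact: connect_trans ij (lift _ _ (conn (inr j) (inr b) jV xV)).
split.
- apply/subsetP => -[a b]; rewrite !inE xpair_eqE.
  case/orP => [/andP [/eqP -> /eqP ->]|/(edge_in_parts tV) []]; first by rewrite iV jV.
  by rewrite !inE => /andP [_ ->] ->.
- move=> x y xV yV; apply: (@connect_trans _ _ (inl i)); last exact: from_i.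
  by rewrite (sym_connect_sym (badj_sym t')); apply: from_i.
- move=> p up sp; apply/negP => cp; have [ip|ip] := boolP (inl i \in p).
    have [u1 [u2 [+ /nbr u1j /nbr u2j]]] := cycle_two_neighbours (badj_sym t') up sp cp ip.
    by rewrite u1j u2j eqxx.
  apply: (negP (acyc p up sp)); apply: (sub_in_cycle (P := predC1 (inl i))) cp; last first.
    by apply/allP => z zp; apply: contraNneq ip => <-.
  case=> [a|b] [a'|b'] //=; rewrite !inE !inl_eqE xpair_eqE => ai ai';
  by [rewrite (negbTE ai) | rewrite (negbTE ai')].
Qed.

Lemma btree_del_leaf VA VB t i j : i \in VA -> (forall j', (i, j') \in t -> j' = j) ->
  btree VA VB t -> btree (VA :\ i) VB (t :\ (i, j)).
Proof.
move=> iV leaf [tV conn acyc].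
have nbr u : badj t (inl i) u -> u = inr j by case: u => [//|j'] /= /leaf ->.
split.
- apply/subsetP => -[a b]; rewrite !inE => /andP [ne ab].
  have [aV bV] := edge_in_parts tV ab; rewrite aV bV !andbT.
  by apply: contraNneq ne => /= ai; rewrite ai in ab *; rewrite (leaf _ ab).
- have parts z : in_parts (VA :\ i) VB z -> in_parts VA VB z /\ z != inl i.
    by case: z => [a|b] //=; rewrite !inE => /andP [].
  move=> x y /parts [xV xi] /parts [yV yi].
  have /connectP [p pp y_last] := conn x y xV yV; rewrite y_last in yi *.
  case: (shortenP pp) yi => q pq uq _ yi.
  have iq := uniq_path_avoid_leaf (badj_sym t) nbr pq uq xi yi.
  apply/connectP; exists q => //; move: pq; apply: (sub_in_path (P := predC1 (inl i))).
    case=> [a|b] [a'|b'] //=; rewrite !inE !inl_eqE => ai ai' ->; rewrite xpair_eqE andbT;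
    by [rewrite (negbTE ai) | rewrite (negbTE ai')].
  by apply/allP => z; rewrite inE => /predU1P [->|zq] //=; apply: contraNneq iq => <-.
- move=> p up sp; apply: contra (acyc p up sp); apply: sub_cycle.
  by case=> [a|b] [a'|b'] //=; rewrite inE => /andP [_ ->].
Qed.

Lemma degA_setU1_neq t i j i' : i' != i -> degA ((i, j) |: t) i' = degA t i'.
Proof. by move=> ne; apply: eq_card => j'; rewrite !inE xpair_eqE (negbTE ne). Qed.

Lemma degA_setD1_neq t i j i' : i' != i -> degA (t :\ (i, j)) i' = degA t i'.
Proof. by move=> ne; apply: eq_card => j'; rewrite !inE xpair_eqE (negbTE ne). Qed.

Lemma degB_setU1_neq t i j j' : j' != j -> degB ((i, j) |: t) j' = degB t j'.
Proof. by move=> ne; apply: eq_card => i'; rewrite !inE xpair_eqE (negbTE ne) andbF. Qed.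

Lemma degB_setD1_neq t i j j' : j' != j -> degB (t :\ (i, j)) j' = degB t j'.
Proof. by move=> ne; apply: eq_card => i'; rewrite !inE xpair_eqE (negbTE ne) andbF. Qed.

Lemma degA_setU1_fresh t i j : (forall j', (i, j') \notin t) -> degA ((i, j) |: t) i = 1.
Proof.
move=> fresh; rewrite /degA -(cards1 j); apply: eq_card => j'.
by rewrite !inE xpair_eqE eqxx (negbTE (fresh j')) orbF.
Qed.

Lemma degB_setU1 t i j : (i, j) \notin t -> degB ((i, j) |: t) j = (degB t j).+1.
Proof.
move=> ij; rewrite /degB (_ : [set _ | _] = i |: [set i' | (i', j) \in t]).
  by rewrite cardsU1 inE ij.
by apply/setP => i'; rewrite !inE xpair_eqE eqxx andbT.
Qed.

Lemma degA_eq1_nbr t i j j' : degA t i = 1 -> (i, j) \in t -> (i, j') \in t -> j' = j.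
Proof.
move=> /eqP /cards1P [j0 nbrs] ij ij'.
have nbr k : (i, k) \in t -> k = j0 by move=> ik; apply/set1P; rewrite -nbrs inE.
by rewrite (nbr _ ij) (nbr _ ij').
Qed.

Lemma btrees_del_leaf VA VB d e F t i j : i \in VA -> d i = 1 -> (i, j) \in t ->
  t \in btrees VA VB d e F -> t :\ (i, j) \in btrees (VA :\ i) VB d (decr e j) (F :\ (i, j)).
Proof.
move=> iV di ij /btreesP [tree Ft dA dB]; have degi : degA t i = 1 by rewrite dA.
apply/btreesP; split.
- by apply: btree_del_leaf iV _ tree => j'; apply: degA_eq1_nbr degi ij.
- exact: setSD.
- by move=> i'; rewrite !inE => /andP [ne i'V]; rewrite degA_setD1_neq // dA.
- move=> j'; rewrite /decr; have [-> jV|ne j'V] := eqVneq j' j; last first.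
    by rewrite degB_setD1_neq // dB // subn0.
  by rewrite -(dB j jV) -{2}(setD1K ij) degB_setU1 ?setD11 ?subn1.
Qed.

Lemma btrees_add_leaf VA VB d e F t i j : i \in VA -> j \in VB -> d i = 1 -> 0 < e j ->
  t \in btrees (VA :\ i) VB d (decr e j) (F :\ (i, j)) -> (i, j) |: t \in btrees VA VB d e F.
Proof.
move=> iV jV di ej /btreesP [tree Ft dA dB].
have fresh j' : (i, j') \notin t by apply: btree_edge_notin tree; rewrite setD11.
apply/btreesP; split.
- exact: btree_add_leaf.
- apply/subsetP => f fF; rewrite !inE; have [//|ne /=] := eqVneq f (i, j).
  by apply: (subsetP Ft); rewrite !inE ne.
- move=> i' i'V; have [->|ne] := eqVneq i' i; first by rewrite degA_setU1_fresh.
  by rewrite degA_setU1_neq // dA // !inE ne.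
- move=> j' j'V; have [->|ne] := eqVneq j' j; last first.
    by rewrite degB_setU1_neq // dB // /decr (negbTE ne) subn0.
  by rewrite degB_setU1 // dB // /decr eqxx subn1 prednK.
Qed.

Lemma card_btrees_leaf VA VB d e F i : i \in VA -> d i = 1 -> {in VB, forall j, 0 < e j} ->
  #|btrees VA VB d e F| = \sum_(j in VB) #|btrees (VA :\ i) VB d (decr e j) (F :\ (i, j))|.
Proof.
move=> iV di e_gt0.
have one_edge t : t \in btrees VA VB d e F -> \sum_(j in VB) ((i, j) \in t) = 1.
  case/btreesP=> [[tV _ _] _ dA _]; have degi : degA t i = 1 by rewrite dA.
  have /card_gt0P [j] : 0 < degA t i by rewrite degi.
  rewrite inE => ij; have [_ jV] := edge_in_parts tV ij.
  rewrite (bigD1 j) //= ij big1 // => j' /andP [_ ne].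
  by apply/eqP; rewrite eqb0; apply: contra ne => ij'; rewrite (degA_eq1_nbr degi ij ij').
rewrite -sum1_card (eq_bigr _ (fun t tS => esym (one_edge t tS))) exchange_big /=.
apply: eq_bigr => j jV; rewrite -big_mkcondr /= sum1dep_card.
have fresh t : t \in btrees (VA :\ i) VB d (decr e j) (F :\ (i, j)) -> (i, j) \notin t.
  by case/btreesP=> tree _ _ _; apply: btree_edge_notin tree; rewrite setD11.
rewrite -[RHS](card_in_imset (f := fun t => (i, j) |: t)); last first.
  by move=> t1 t2 /fresh t1ij /fresh t2ij eq12; rewrite -(setU1K t1ij) eq12 setU1K.
apply: eq_card => t; rewrite inE; apply/andP/imsetP => [[tS ij]|[t' t'S ->]].
  by exists (t :\ (i, j)); [apply: btrees_del_leaf | rewrite setD1K].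
by split; [apply: btrees_add_leaf; rewrite ?e_gt0 | apply: setU11].
Qed.

Lemma btrees_notin VA VB d e k m : k \notin VA -> btrees VA VB d e [set (k, m)] = set0.
Proof.
move=> kV; apply/setP => t; rewrite in_set0; apply/negP => /btreesP [tree + _ _].
by rewrite sub1set; apply/negP; apply: btree_edge_notin tree.
Qed.

Lemma btrees_eq0 VA VB d e F i : i \in VA -> d i = 0 -> VB != set0 ->
  btrees VA VB d e F = set0.
Proof.
move=> iV di VB0; apply/setP => t; rewrite in_set0; apply/negP => /btreesP [tree _ dA _].
by have := btree_degA_gt0 tree iV VB0; rewrite dA ?di.
Qed.

Lemma btree0 j : btree set0 [set j] set0.
Proof.
split; first exact: sub0set.
  by case=> [a|b] [a'|b'] //=; rewrite ?inE // => /eqP -> /eqP ->.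
by move=> [|x [|y p]] //= _ _; case: x y => [a|b] [a'|b']; rewrite //= inE.
Qed.

Lemma btrees_single (i : A) (j : B) d e F : d i = 1 -> e j = 1 -> F \subset [set (i, j)] ->
  btrees [set i] [set j] d e F = [set [set (i, j)]].
Proof.
move=> di ej Fij; apply/setP => t; rewrite in_set1; apply/btreesP/eqP => [[tree _ dA _]|->].
  have [tV _ _] := tree; have /card_gt0P [j' ij'] : 0 < degA t i by rewrite dA ?inE ?di.
  rewrite inE in ij'; have [_] := edge_in_parts tV ij'; move/set1P => j'j; subst j'.
  apply/eqP; rewrite eqEsubset sub1set ij' andbT; apply: subset_trans tV _.
  by apply/subsetP => -[a b]; rewrite !inE xpair_eqE.
split => //.
- rewrite -[[set (i, j)]]setU0; apply: btree_add_leaf; rewrite ?set11 // setDv; exact: btree0.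
- move=> _ /set1P ->; rewrite di /degA -(cards1 j); apply: eq_card => j'.
  by rewrite !inE xpair_eqE eqxx.
- move=> _ /set1P ->; rewrite ej /degB -(cards1 i); apply: eq_card => i'.
  by rewrite !inE xpair_eqE eqxx andbT.
Qed.

Definition flip_vert (x : A + B) : B + A :=
  match x with inl i => inr i | inr j => inl j end.

Definition flip_edges t : {set B * A} := [set q | (q.2, q.1) \in t].

End BipartiteTrees.

Arguments flip_vert {A B}.
Arguments flip_edges {A B}.

Lemma flip_vertK (A B : finType) : cancel (@flip_vert A B) (@flip_vert B A).
Proof. by case. Qed.

Section Flip.
Variables A B : finType.
Implicit Types (t F : {set A * B}) (VA : {set A}) (VB : {set B}).

Lemma flip_edgesK t : flip_edges (flip_edges t) = t.
Proof. by apply/setP => -[a b]; rewrite !inE. Qed.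

Lemma flip_edges0 : flip_edges (set0 : {set A * B}) = set0.
Proof. by apply/setP => -[a b]; rewrite !inE. Qed.

Lemma flip_edges1 (i : A) (j : B) : flip_edges [set (i, j)] = [set (j, i)].
Proof. by apply/setP => -[a b]; rewrite !inE !xpair_eqE andbC. Qed.

Lemma badj_flip t x y : badj (flip_edges t) (flip_vert x) (flip_vert y) = badj t x y.
Proof. by case: x y => [a|b] [a'|b'] //=; rewrite inE. Qed.

Lemma degA_flip t j : degA (flip_edges t) j = degB t j.
Proof. by apply: eq_card => i; rewrite !inE. Qed.

Lemma degB_flip t i : degB (flip_edges t) i = degA t i.
Proof. by apply: eq_card => j; rewrite !inE. Qed.

Lemma btree_flip VA VB t : btree VA VB t -> btree VB VA (flip_edges t).
Proof.
case=> tV conn acyc; have adj_flip := badj_flip t.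
have flip_inj := can_inj (@flip_vertK B A).
split.
- by apply/subsetP => -[j i]; rewrite !inE /= => /(edge_in_parts tV) [-> ->].
- move=> x y xV yV; rewrite -(flip_vertK x) -(flip_vertK y).
  have /connectP [p pp ->] : connect (badj t) (flip_vert x) (flip_vert y).
    by apply: conn; [case: x xV | case: y yV].
  apply/connectP; exists (map flip_vert p); last by rewrite last_map.
  by rewrite path_map (eq_path adj_flip).
- move=> p up sp; rewrite -(mapK (@flip_vertK B A) p) cycle_map (eq_cycle adj_flip).
  by apply: acyc; rewrite ?size_map // map_inj_uniq.
Qed.

Lemma btrees_flip VA VB d e F t :
  t \in btrees VA VB d e F -> flip_edges t \in btrees VB VA e d (flip_edges F).
Proof.
case/btreesP=> tree Ft dA dB; apply/btreesP; split.
- exact: btree_flip.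
- by apply/subsetP => -[j i]; rewrite !inE; apply: (subsetP Ft).
- by move=> j jV; rewrite degA_flip dB.
- by move=> i iV; rewrite degB_flip dA.
Qed.

End Flip.

Lemma card_btrees_flip (A B : finType) (VA : {set A}) (VB : {set B}) d e F :
  #|btrees VA VB d e F| = #|btrees VB VA e d (flip_edges F)|.
Proof.
have -> : btrees VB VA e d (flip_edges F) = flip_edges @: btrees VA VB d e F.
  apply/setP => t'; apply/idP/imsetP => [/btrees_flip | [t tS ->]]; last exact: btrees_flip.
  by rewrite !flip_edgesK => tS; exists (flip_edges t'); rewrite ?flip_edgesK.
by rewrite card_imset //; apply: can_inj (@flip_edgesK A B).
Qed.

Definition tree_degrees (A B : finType) (VA : {set A}) (VB : {set B})
    (d : A -> nat) (e : B -> nat) :=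
  [/\ 0 < #|VA|, 0 < #|VB|, \sum_(i in VA) d i = (#|VA| + #|VB|).-1
    & \sum_(j in VB) e j = (#|VA| + #|VB|).-1].

Lemma tree_degrees_flip (A B : finType) (VA : {set A}) (VB : {set B}) d e :
  tree_degrees VA VB d e -> tree_degrees VB VA e d.
Proof. by case=> a0 b0 sd se; split; rewrite // addnC. Qed.

Lemma tree_degrees_card1 (A B : finType) (VA : {set A}) (VB : {set B}) d e i :
  tree_degrees VA VB d e -> #|VA| = 1 -> i \in VA -> d i = #|VB|.
Proof.
case=> _ _ sd _ /eqP/cards1P [i0 VAi0]; move: sd.
by rewrite VAi0 big_set1 cards1 add1n => di0 /set1P ->.
Qed.

Lemma tree_degrees_leaf (A B : finType) (VA : {set A}) (VB : {set B}) d e i j :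
  tree_degrees VA VB d e -> i \in VA -> d i = 1 -> 1 < #|VA| -> j \in VB -> 0 < e j ->
  tree_degrees (VA :\ i) VB d (decr e j).
Proof.
case=> _ b0 sd se iV di a_gt1 jV ej.
have cardA : #|VA| = #|VA :\ i|.+1 by rewrite (cardsD1 i VA) iV.
rewrite (big_setD1 _ iV) di cardA /= in sd; rewrite (big_setD1 _ jV) cardA /= in se.
split => //; [by rewrite cardA in a_gt1 | lia |].
rewrite (big_setD1 _ jV) /= {1}/decr eqxx subn1.
rewrite (eq_bigr e) => [|j' /setD1P [/negbTE j'j _]]; last by rewrite /decr j'j subn0.
lia.
Qed.

Lemma leaf_or_double_card (T : finType) (V : {set T}) (f : T -> nat) :
  {in V, forall x, 0 < f x} -> (exists2 x, x \in V & f x = 1) \/ 2 * #|V| <= \sum_(x in V) f x.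
Proof.
move=> f_gt0; have [x /andP [xV /eqP fx]|no_leaf] := pickP [pred x in V | f x == 1].
  by left; exists x.
right; rewrite mulnC -sum_nat_const; apply: leq_sum => x xV.
by have := f_gt0 x xV; have := no_leaf x; rewrite /= xV; case: (f x) => [|[|]].
Qed.

Lemma leaf_exists (A B : finType) (VA : {set A}) (VB : {set B}) d e :
  tree_degrees VA VB d e -> 2 < #|VA| + #|VB| ->
  {in VA, forall i, 0 < d i} -> {in VB, forall j, 0 < e j} ->
  (exists2 i, i \in VA & d i = 1 /\ 1 < #|VA|) \/ (exists2 j, j \in VB & e j = 1 /\ 1 < #|VB|).
Proof.
case=> a0 b0 sd se n_gt2 /leaf_or_double_card [[i iV di]|dA] /leaf_or_double_card.
- case=> [[j jV ej]|dB]; last by left; exists i => //; split => //; rewrite se in dB; lia.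
  have [a_gt1|a_le1] := ltnP 1 #|VA|; first by left; exists i.
  by right; exists j => //; split => //; lia.
- rewrite sd in dA; case=> [[j jV ej]|dB]; first by right; exists j => //; split => //; lia.
  rewrite se in dB; lia.
Qed.

Lemma tree_degrees_ind
    (P : forall A B : finType, {set A} -> {set B} -> (A -> nat) -> (B -> nat) -> Prop) :
  (forall (A B : finType) VA VB d e, P A B VA VB d e -> P B A VB VA e d) ->
  (forall (A B : finType) (i : A) (j : B) d e, d i = 1 -> e j = 1 ->
     P A B [set i] [set j] d e) ->
  (forall (A B : finType) VA VB d e i, tree_degrees VA VB d e -> i \in VA -> d i = 0 ->
     P A B VA VB d e) ->
  (forall (A B : finType) VA VB d e i, tree_degrees VA VB d e -> i \in VA -> d i = 1 ->
     1 < #|VA| -> {in VB, forall j, 0 < e j} ->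
     {in VB, forall j, P A B (VA :\ i) VB d (decr e j)} -> P A B VA VB d e) ->
  forall (A B : finType) VA VB d e, tree_degrees VA VB d e -> P A B VA VB d e.
Proof.
move=> Pflip Pbase Pzero Pleaf A B VA VB d e.
have [n] := ubnP (#|VA| + #|VB|); elim: n => // n IH in A B VA VB d e *.
move=> size_n degs; have [a0 b0 sd se] := degs.
have [i /andP [iV /eqP di]|d_gt0] := pickP [pred i in VA | d i == 0].
  exact: Pzero degs iV di.
have [j /andP [jV /eqP ej]|e_gt0] := pickP [pred j in VB | e j == 0].
  by apply: Pflip; apply: Pzero (tree_degrees_flip degs) jV ej.
have {}d_gt0 : {in VA, forall i, 0 < d i}.
  by move=> i iV; rewrite lt0n; have := d_gt0 i; rewrite /= iV /= => ->.
have {}e_gt0 : {in VB, forall j, 0 < e j}.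
  by move=> j jV; rewrite lt0n; have := e_gt0 j; rewrite /= jV /= => ->.
have [n_gt2|n_le2] := ltnP 2 (#|VA| + #|VB|).
  case: (leaf_exists degs n_gt2 d_gt0 e_gt0) => [[i iV [di a_gt1]]|[j jV [ej b_gt1]]].
    apply: (Pleaf _ _ _ _ _ _ i) => // j jV; apply: IH; last first.
      exact: tree_degrees_leaf degs iV di a_gt1 jV (e_gt0 j jV).
    by rewrite (cardsD1 i VA) iV in size_n.
  apply: Pflip; apply: (Pleaf _ _ _ _ _ _ j (tree_degrees_flip degs) jV ej b_gt1 d_gt0).
  move=> i iV; apply: IH; last first.
    exact: tree_degrees_leaf (tree_degrees_flip degs) jV ej b_gt1 iV (d_gt0 i iV).
  by rewrite (cardsD1 j VB) jV addnC in size_n.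
have /cards1P [i VAi] : #|VA| == 1 by apply/eqP; lia.
have /cards1P [j VBj] : #|VB| == 1 by apply/eqP; lia.
move: sd se; rewrite VAi VBj !big_set1 !cards1 => di ej; exact: Pbase.
Qed.

Local Open Scope ring_scope.

(* As d/d! = 1/(d-1)! for d > 0, this is the product of the two multinomial coefficients of
   the statement; it vanishes when some prescribed degree is 0. *)
Definition ntrees (A B : finType) (VA : {set A}) (VB : {set B}) (d : A -> nat) (e : B -> nat)
    : rat :=
  (#|VA|.-1)`!%:R * (#|VB|.-1)`!%:R *
  \prod_(i in VA) ((d i)%:R / (d i)`!%:R) * \prod_(j in VB) ((e j)%:R / (e j)`!%:R).

Definition edge_frac (a c dk em : nat) : rat :=
  if (1 < a)%N && (1 < c)%N then
    1 - (a%:R - em%:R) * (c%:R - dk%:R) / ((a%:R - 1) * (c%:R - 1))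
  else 1.

Lemma natr_fact_neq0 n : n`!%:R != 0 :> rat.
Proof. by rewrite pnatr_eq0 -lt0n fact_gt0. Qed.

Lemma ntrees_flip (A B : finType) (VA : {set A}) (VB : {set B}) d e :
  ntrees VB VA e d = ntrees VA VB d e.
Proof. by rewrite /ntrees; ring. Qed.

Lemma edge_frac_flip a c dk em : edge_frac a c dk em = edge_frac c a em dk.
Proof. by rewrite /edge_frac andbC (mulrC (a%:R - _)) (mulrC (a%:R - 1)). Qed.

Lemma ntrees_eq0 (A B : finType) (VA : {set A}) (VB : {set B}) d e i :
  i \in VA -> d i = 0%N -> ntrees VA VB d e = 0.
Proof. by move=> iV di; rewrite /ntrees (big_setD1 _ iV) di /= !mul0r !mulr0 !mul0r. Qed.

Lemma ntrees_single (A B : finType) (i : A) (j : B) d e :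
  d i = 1%N -> e j = 1%N -> ntrees [set i] [set j] d e = 1.
Proof. by move=> di ej; rewrite /ntrees !cards1 !big_set1 di ej /= !(divr1, mulr1). Qed.

Lemma ntrees_leaf (A B : finType) (VA : {set A}) (VB : {set B}) d e i j :
  i \in VA -> d i = 1%N -> (1 < #|VA|)%N -> j \in VB -> (0 < e j)%N ->
  ntrees (VA :\ i) VB d (decr e j) = ntrees VA VB d e * (((e j)%:R - 1) / #|VA :\ i|%:R).
Proof.
move=> iV di; rewrite /ntrees (cardsD1 i VA) iV (big_setD1 _ iV) di /=.
case: #|VA :\ i| => [//|a] _ jV; rewrite !(big_setD1 _ jV) /= /decr eqxx.
rewrite (eq_bigr (fun j' => (e j')%:R / (e j')`!%:R)) => [|j' /setD1P [/negbTE -> _]];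
  last by rewrite subn0.
case: (e j) => [//|n] _; rewrite subn1 /= !factS !natrM.
have hn := natr_fact_neq0 n; rewrite -!natr1; field.
by rewrite hn !natr1 !pnatr_eq0.
Qed.

Lemma sum_leaf_weights (B : finType) (VB : {set B}) (e : B -> nat) a :
  (0 < a)%N -> (\sum_(j in VB) e j)%N = (a + #|VB|)%N ->
  \sum_(j in VB) ((e j)%:R - 1) / a%:R = 1 :> rat.
Proof.
move=> a_gt0 se; rewrite -mulr_suml sumrB -natr_sum se sumr_const natrD addrK.
by rewrite divff // pnatr_eq0 -lt0n.
Qed.

Lemma edge_frac_leaf a c em : (0 < a)%N -> (0 < c)%N -> (c = 1 -> em = a.+1)%N ->
  edge_frac a.+1 c 1 em = (em%:R - 1) / a%:R.
Proof.
move=> a_gt0 c_gt0 c1_em; have ha : a%:R != 0 :> rat by rewrite pnatr_eq0 -lt0n.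
rewrite /edge_frac ltnS a_gt0 /=; case: c c_gt0 c1_em => [//|[|c]] _ /=.
  by move=> /(_ erefl) ->; rewrite -natr1 addrK divff.
by move=> _; rewrite -!natr1; field; rewrite ha addrK natr1 pnatr_eq0.
Qed.

Lemma edge_frac_recursion (B : finType) (VB : {set B}) (e : B -> nat) m a dk :
  m \in VB -> (0 < e m)%N -> (0 < a)%N -> (\sum_(j in VB) e j)%N = (a + #|VB|)%N ->
  (a = 1 -> dk = #|VB|)%N ->
  \sum_(j in VB) ((e j)%:R - 1) / a%:R * edge_frac a #|VB| dk (decr e j m) =
  edge_frac a.+1 #|VB| dk (e m).
Proof.
move=> mV em_gt0 a_gt0 se a1_dk; have weights := sum_leaf_weights a_gt0 se.
rewrite /edge_frac ltnS a_gt0 /=.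
have [c_gt1|c_le1] := ltnP 1 #|VB|; last first.
  by rewrite andbF -[RHS]weights; under eq_bigr do rewrite mulr1.
rewrite andbT; have [a_gt1|a_le1] := ltnP 1 a; last first.
  have a1 : a = 1%N by apply/eqP; rewrite eqn_leq a_le1 a_gt0.
  rewrite a1_dk // subrr mulr0 mul0r subr0 -[RHS]weights a1 /=.
  by under eq_bigr do rewrite mulr1.
set w := fun j => ((e j)%:R - 1) / a%:R :> rat.
set X := (#|VB|%:R - dk%:R) / ((a%:R - 1) * (#|VB|%:R - 1)) :> rat.
have summand j : w j * (1 - (a%:R - (decr e j m)%:R) * (#|VB|%:R - dk%:R) /
                              ((a%:R - 1) * (#|VB|%:R - 1))) =
                 w j * (1 - (a%:R - (e m)%:R) * X) - (m == j)%:R * w m * X.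
  rewrite /decr natrB; last exact: leq_trans (leq_b1 _) em_gt0.
  by have [->|_] := eqVneq m j; rewrite /X /=; ring.
rewrite (eq_bigr _ (fun j _ => summand j)) sumrB -mulr_suml weights mul1r.
rewrite -!mulr_suml (bigD1 m mV) big1 /= => [|j /andP [_ jm]]; last first.
  by rewrite eq_sym (negbTE jm).
have sub1_neq0 n : (1 < n)%N -> n%:R - 1 != 0 :> rat.
  by move=> n_gt1; rewrite subr_eq0 pnatr_eq1 neq_ltn n_gt1 orbT.
rewrite eqxx addr0 mul1r /w /X -natr1; field.
by rewrite addrK pnatr_eq0 -lt0n a_gt0 !sub1_neq0.
Qed.

Theorem card_btrees (A B : finType) (VA : {set A}) (VB : {set B}) d e :
  tree_degrees VA VB d e -> #|btrees VA VB d e set0|%:R = ntrees VA VB d e.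
Proof.
move: A B VA VB d e; apply: tree_degrees_ind.
- by move=> A B VA VB d e IH; rewrite card_btrees_flip flip_edges0 IH ntrees_flip.
- by move=> A B i j d e di ej; rewrite btrees_single ?sub0set // cards1 ntrees_single.
- move=> A B VA VB d e i [_ b0 _ _] iV di.
  by rewrite (btrees_eq0 _ _ iV di) ?cards0 ?(ntrees_eq0 _ _ iV di) // -card_gt0.
move=> A B VA VB d e i degs iV di a_gt1 e_gt0 IH; have [_ _ _ se] := degs.
have cardA : #|VA| = #|VA :\ i|.+1 by rewrite (cardsD1 i VA) iV.
have a_gt0 : (0 < #|VA :\ i|)%N by rewrite cardA in a_gt1.
have {}se : (\sum_(j in VB) e j = #|VA :\ i| + #|VB|)%N by rewrite se cardA.
rewrite (card_btrees_leaf _ iV di e_gt0) natr_sum.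
under eq_bigr => j jV do rewrite set0D IH // ntrees_leaf ?e_gt0 //.
by rewrite -mulr_sumr sum_leaf_weights ?mulr1.
Qed.

Theorem card_btrees_edge (A B : finType) (VA : {set A}) (VB : {set B}) d e :
  tree_degrees VA VB d e -> forall k m, k \in VA -> m \in VB ->
  #|btrees VA VB d e [set (k, m)]|%:R = ntrees VA VB d e * edge_frac #|VA| #|VB| (d k) (e m).
Proof.
move: A B VA VB d e; apply: tree_degrees_ind.
- move=> A B VA VB d e IH k m kV mV.
  by rewrite card_btrees_flip flip_edges1 IH // ntrees_flip edge_frac_flip.
- move=> A B i j d e di ej k m /set1P -> /set1P ->.
  by rewrite btrees_single // !cards1 ntrees_single // mul1r.
- move=> A B VA VB d e i [_ b0 _ _] iV di k m _ _.
  by rewrite (btrees_eq0 _ _ iV di) ?cards0 ?(ntrees_eq0 _ _ iV di) ?mul0r // -card_gt0.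
move=> A B VA VB d e i degs iV di a_gt1 e_gt0 IH k m kV mV; have [_ b0 _ se] := degs.
have cardA : #|VA| = #|VA :\ i|.+1 by rewrite (cardsD1 i VA) iV.
have a_gt0 : (0 < #|VA :\ i|)%N by rewrite cardA in a_gt1.
have {}se : (\sum_(j in VB) e j = #|VA :\ i| + #|VB|)%N by rewrite se cardA.
rewrite (card_btrees_leaf _ iV di e_gt0) natr_sum.
have [ki|ki] := eqVneq k i.
  rewrite ki (bigD1 m mV) big1 /= => [|j /andP [_ jm]]; last first.
    by rewrite set1D1_neq ?btrees_notin ?cards0 ?setD11 // xpair_eqE eqxx eq_sym.
  rewrite setDv addr0 card_btrees; last first.
    exact: tree_degrees_leaf degs iV di a_gt1 mV (e_gt0 m mV).
  rewrite ntrees_leaf ?e_gt0 // di cardA edge_frac_leaf // => VB1.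
  by rewrite -cardA (tree_degrees_card1 (tree_degrees_flip degs)).
rewrite cardA -edge_frac_recursion ?e_gt0 //; last first.
  move=> VAi1; apply: tree_degrees_card1 VAi1 _.
    exact: tree_degrees_leaf degs iV di a_gt1 mV (e_gt0 m mV).
  by rewrite !inE ki.
rewrite mulr_sumr; apply: eq_bigr => j jV.
rewrite set1D1_neq ?xpair_eqE ?(negbTE ki) // IH ?ntrees_leaf ?e_gt0 ?mulrA //.
by rewrite !inE ki.
Qed.

Lemma dvdn_prod_fact (I : finType) (f : I -> nat) : (\prod_i (f i)`! %| (\sum_i f i)`!)%N.
Proof.
elim/big_rec2: _ => [//|i y x _ IH].
rewrite -[X in (_ %| X)%N]/((f i + y)`!) -(bin_fact (leq_addr y (f i))) addKn.
by apply: dvdn_mull; apply: dvdn_mul (dvdnn _) IH.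
Qed.

Lemma natr_multinom_pred (I : finType) n (k : I -> nat) : (\sum_i k i = n + #|I|)%N ->
  (multinom n (fun i => Posz (k i) - 1))%:R = n`!%:R * \prod_i ((k i)%:R / (k i)`!%:R) :> rat.
Proof.
move=> sk; rewrite /multinom; have [i /= /eqP ki|k_gt0] := pickP [pred i | k i == 0%N].
  rewrite [X in _ * X](bigD1 i) //= ki mul0r mulr0 ifF //; apply/negbTE/nandP; left.
  by apply/forallPn; exists i; rewrite ki.
have {}k_gt0 i : (0 < k i)%N by rewrite lt0n; have := k_gt0 i; rewrite /= => ->.
have predE i : Posz (k i) - 1 = Posz (k i).-1.
  by have := k_gt0 i; case: (k i) => //= k' _; rewrite -addn1 PoszD addrK.
under eq_forallb => i do rewrite predE.
rewrite (eq_bigr (fun i => Posz (k i).-1)) => [|i _]; last exact: predE.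
rewrite (eq_bigr (fun i => (k i).-1`!)) => [|i _]; last by rewrite predE.
have sum_pred : (\sum_i (k i).-1 = n)%N.
  apply/eqP; rewrite -(eqn_add2r #|I|) -sk -sum1_card -big_split /=; apply/eqP.
  by apply/eq_bigr => i _; rewrite addn1 prednK.
rewrite ifT; last first.
  apply/andP; split; first exact/forallP.
  by rewrite -(big_morph Posz PoszD (erefl 0%Z)) sum_pred.
have dvd_fact : (\prod_i ((k i).-1)`! %| n`!)%N by rewrite -sum_pred dvdn_prod_fact.
have prod_neq0 : (\prod_i ((k i).-1)`!)%:R != 0 :> rat.
  by rewrite pnatr_eq0 -lt0n prodn_gt0 // => i; rewrite fact_gt0.
rewrite natr_div ?unitfE // natr_prod -prodfV; congr (_ * _); apply: eq_bigr => i _.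
have := k_gt0 i; case: (k i) => //= k' _; rewrite factS natrM.
by have hk := natr_fact_neq0 k'; field; rewrite hk addrC natr1 pnatr_eq0.
Qed.

Lemma S_set_btrees b w (d : 'I_b.+1 -> nat) (e : 'I_w.+1 -> nat) k m :
  S_set d e k m = btrees [set: 'I_b.+1] [set: 'I_w.+1] d e [set (k, m)].
Proof.
apply/setP => t; rewrite !inE; apply/asboolP/asboolP.
  case=> [[conn acyc] [km [dA dB]]]; split; rewrite ?sub1set //; last by move=> *; apply: dB.
    split => //; first by apply/subsetP => -[i j]; rewrite !inE.
    by move=> x y _ _; apply: conn.
  by move=> *; apply: dA.
case=> [[_ conn acyc] km dA dB]; split; last split; last by split => *; [apply: dA | apply: dB].
  by split => // x y; apply: conn; [case: x | case: y] => ? /=; rewrite in_setT.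
by rewrite -sub1set.
Qed.

Theorem lemmaB2 (b w : nat) (d : 'I_b.+1 -> nat) (e : 'I_w.+1 -> nat)
    (k : 'I_b.+1) (m : 'I_w.+1) :
  (\sum_i d i)%N = (b + w + 1)%N ->
  (\sum_j e j)%N = (b + w + 1)%N ->
  (#|S_set d e k m|%:R : rat) =
    ((multinom b (fun j => (Posz (e j) - 1)%R))%:R *
     (multinom w (fun i => (Posz (d i) - 1)%R))%:R *
     (if (0 < w)%N && (0 < b)%N then
        1 - ((b%:R - (e m)%:R + 1) * (w%:R - (d k)%:R + 1)) / (b%:R * w%:R)
      else 1))%R.
Proof.
move=> sd se.
have degs : tree_degrees [set: 'I_b.+1] [set: 'I_w.+1] d e.
  by split; rewrite ?(eq_bigl _ _ (@in_setT _)) ?cardsT ?card_ord ?sd ?se //; lia.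
rewrite S_set_btrees card_btrees_edge ?in_setT // /ntrees !cardsT !card_ord /=.
rewrite !(eq_bigl _ _ (@in_setT _)).
rewrite natr_multinom_pred; last by rewrite card_ord; lia.
rewrite natr_multinom_pred; last by rewrite card_ord; lia.
have -> : edge_frac b.+1 w.+1 (d k) (e m) = (if (0 < w)%N && (0 < b)%N then
    1 - (b%:R - (e m)%:R + 1) * (w%:R - (d k)%:R + 1) / (b%:R * w%:R) else 1).
  rewrite /edge_frac !ltnS andbC; case: ifP => // _.
  by rewrite -!natr1 !addrK; congr (1 - _ / _); ring.
set R := (if _ then _ else _); set Pd := \prod_i _; set Pe := \prod_i _.
ring.
Qed.
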